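(* Let $B$ be a Borel ideal of $S=k[x_1,\dots,x_n]$ and suppose $(x_1,\dots,x_p)$ is an associated prime of $S/B$. Then there exists $m\in\mathrm{Bgens}(B)$ such that $x_p$ divides $m$ and $\operatorname{Ann}_{S/B}\!\left(\frac{m}{x_p}\right)=(x_1,\dots,x_p)$.
   Context: A Borel ideal is a monomial ideal closed under Borel moves $m\mapsto m\frac{x_{i_1}}{x_{j_1}}\cdots\frac{x_{i_s}}{x_{j_s}}$ ($i_t<j_t$, all $x_{j_t}\mid m$). For a set $T$ of monomials, $\mathrm{Borel}(T)$ is the smallest Borel ideal containing $T$; $\mathrm{Bgens}(B)$ is the unique minimal set $T$ of monomials with $\mathrm{Borel}(T)=B$. For a monomial $\mu$, $\operatorname{Ann}_{S/B}(\mu)=(B:\mu)=\{f\in S: f\mu\in B\}$. *)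

From HB Require Import structures.
From mathcomp Require Import all_boot all_order all_algebra.
Set Implicit Arguments. Unset Strict Implicit. Unset Printing Implicit Defensive.
Import GRing.Theory.
Local Open Scope ring_scope.

(* The polynomial ring R[x_1,...,x_n], built as iterated univariate
   polynomials: mpoly R 0 = R, mpoly R n.+1 = (mpoly R n)[X]. *)
Fixpoint mpoly (R : comNzRingType) (n : nat) : comNzRingType :=
  if n is n'.+1 then ({poly mpoly R n'} : comNzRingType) else R.

(* The variable x_(i+1) of mpoly R n, for i < n (0-indexed: var 0 is x_1). *)
Fixpoint var_nat (R : comNzRingType) (n : nat) : nat -> mpoly R n :=
  match n return nat -> mpoly R n with
  | 0 => fun _ => 0
  | n'.+1 => fun i => if i is i'.+1 then (var_nat R n' i')%:P
                      else ('X : {poly mpoly R n'})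
  end.

Definition var (R : comNzRingType) (n : nat) (i : 'I_n) : mpoly R n :=
  var_nat R n i.

Definition expo (n : nat) := {ffun 'I_n -> nat}.

Definition mono (R : comNzRingType) (n : nat) (e : expo n) : mpoly R n :=
  \prod_(i < n) var R i ^+ e i.
Arguments var R {n} i.
Arguments mono R {n} e.

Definition is_ideal (S : comNzRingType) (I : S -> Prop) : Prop :=
  [/\ I 0, (forall a b, I a -> I b -> I (a + b)) & (forall r a, I a -> I (r * a))].

Definition gen_ideal (S : comNzRingType) (G : S -> Prop) (f : S) : Prop :=
  exists l : seq (S * S), (forall c, c \in l -> G c.2) /\
    f = \sum_(c <- l) c.1 * c.2.

Definition same_ideal (S : comNzRingType) (I J : S -> Prop) : Prop :=
  forall f, I f <-> J f.

Definition monomial_ideal (R : comNzRingType) (n : nat) (I : mpoly R n -> Prop) :=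
  is_ideal I /\ same_ideal I (gen_ideal (fun f => exists e, f = mono R e /\ I f)).

(* elementary Borel move x^e |-> x^e * x_i / x_j  (i < j, x_j | x^e) *)
Definition borel_move (n : nat) (e : expo n) (i j : 'I_n) : expo n :=
  [ffun k => if k == j then (e k).-1 else if k == i then (e k).+1 else e k].

Definition borel_ideal (R : comNzRingType) (n : nat) (B : mpoly R n -> Prop) :=
  monomial_ideal B /\
  forall (e : expo n) (i j : 'I_n), (i < j)%N -> (0 < e j)%N ->
    B (mono R e) -> B (mono R (borel_move e i j)).

Definition borel_of (R : comNzRingType) (n : nat) (T : expo n -> Prop)
  (f : mpoly R n) : Prop :=
  forall B' : mpoly R n -> Prop, borel_ideal B' ->
    (forall e, T e -> B' (mono R e)) -> B' f.
Arguments borel_of R {n} T f.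

(* T is a minimal set of monomials with Borel(T) = B, i.e. T = Bgens(B) *)
Definition is_Bgens (R : comNzRingType) (n : nat) (B : mpoly R n -> Prop)
  (T : expo n -> Prop) : Prop :=
  same_ideal (borel_of R T) B /\
  forall T' : expo n -> Prop, (forall e, T' e -> T e) ->
    same_ideal (borel_of R T') B -> forall e, T e -> T' e.

(* Ann_{S/B}(f) = (B : f) *)
Definition colon (S : comNzRingType) (B : S -> Prop) (f : S) (g : S) : Prop :=
  B (g * f).

Definition assoc_prime (S : comNzRingType) (B P : S -> Prop) : Prop :=
  exists f : S, same_ideal P (colon B f).

(* the prime (x_1, ..., x_(p+1)) (0-indexed p) *)
Definition var_prime (R : comNzRingType) (n : nat) (p : 'I_n) : mpoly R n -> Prop :=
  gen_ideal (fun f => exists i : 'I_n, (i <= p)%N /\ f = var R i).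
Arguments var_prime R {n} p _.

(* Write (x_1, ..., x_p) = (B : f).  Some monomial x^mu of f with x^mu x_p in B is
   tail-free: no monomial x^nu in x_(p+1), ..., x_n has x^mu x^nu in B.  Otherwise a
   single such x^nu would multiply every term of f into B, forcing x^nu into
   (x_1, ..., x_p).  As B = Borel(T), x^mu x_p is divisible by some x^w reached from a
   generator x^t in T by Borel moves, and walking the moves backwards preserves
   "x_p divides x^w and x^w / x_p is tail-free".  So q = x^t / x_p is tail-free, i.e.
   (B : q) is inside (x_1, ..., x_p); conversely x_p q = x^t and, for i < p, x_i q is a
   Borel move of x^t. *)

From HB Require Import structures.
From mathcomp Require Import all_boot all_order all_algebra zify.
From Stdlib Require Import Classical.
Set Implicit Arguments. Unset Strict Implicit. Unset Printing Implicit Defensive.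
Import GRing.Theory.
Local Open Scope ring_scope.

Section IteratedCoefficients.
Variable R : comNzRingType.

(* Exponents are indexed by [nat -> nat] here so that the recursion on [n]
   can shift them; only the values below [n] matter. *)
Fixpoint ncoef (n : nat) : mpoly R n -> (nat -> nat) -> R :=
  match n return mpoly R n -> (nat -> nat) -> R with
  | 0 => fun f _ => f
  | n'.+1 => fun f E => ncoef ((f : {poly mpoly R n'})`_(E 0)) (fun i => E i.+1)
  end.

Fixpoint nmono (n : nat) : (nat -> nat) -> mpoly R n :=
  match n return (nat -> nat) -> mpoly R n with
  | 0 => fun _ => 1
  | n'.+1 => fun E => ('X^(E 0) * (nmono n' (fun i => E i.+1))%:P : {poly mpoly R n'})
  end.

Fixpoint nconst (n : nat) : R -> mpoly R n :=
  match n return R -> mpoly R n with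
  | 0 => fun c => c
  | n'.+1 => fun c => ((nconst n' c)%:P : {poly mpoly R n'})
  end.

Lemma ncoef_ext n (f : mpoly R n) E E' :
  (forall i, (i < n)%N -> E i = E' i) -> ncoef f E = ncoef f E'.
Proof.
elim: n f E E' => [//|n IH] f E E' eqE /=.
by rewrite (eqE 0%N) //; apply: IH => i lt_i_n; apply: eqE.
Qed.

Lemma nmono_ext n E E' :
  (forall i, (i < n)%N -> E i = E' i) -> nmono n E = nmono n E'.
Proof.
elim: n E E' => [//|n IH] E E' eqE /=.
by rewrite (eqE 0%N) // (IH _ (fun i => E' i.+1)) // => i lt_i_n; apply: eqE.
Qed.

Lemma ncoef0 n E : ncoef (0 : mpoly R n) E = 0.
Proof. by elim: n E => [//|n IH] E /=; rewrite coef0 IH. Qed.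

Lemma ncoefD n (f g : mpoly R n) E : ncoef (f + g) E = ncoef f E + ncoef g E.
Proof. by elim: n f g E => [//|n IH] f g E /=; rewrite coefD IH. Qed.

Lemma ncoef_sum n (I : Type) (r : seq I) (F : I -> mpoly R n) E :
  ncoef (\sum_(x <- r) F x) E = \sum_(x <- r) ncoef (F x) E.
Proof.
elim: r => [|a r IH]; first by rewrite !big_nil ncoef0.
by rewrite !big_cons ncoefD IH.
Qed.

Lemma nconst0 n : nconst n 0 = 0.
Proof. by elim: n => [//|n IH] /=; rewrite IH. Qed.

Lemma ncoef1 n E : (forall i, (i < n)%N -> E i = 0%N) -> ncoef (1 : mpoly R n) E = 1.
Proof.
elim: n E => [//|n IH] E E0 /=.
by rewrite coef1 E0 //= IH // => i lt_i_n; apply: E0.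
Qed.

Lemma ncoef_nmonoM n D E (g : mpoly R n) :
  (forall i, (i < n)%N -> (D i <= E i)%N) ->
  ncoef (nmono n D * g) E = ncoef g (fun i => E i - D i)%N.
Proof.
elim: n D E g => [|n IH] D E g leDE /=; first by rewrite mul1r.
rewrite -mulrA coefXnM ltnNge leDE //= coefCM IH // => i lt_i_n.
exact: leDE.
Qed.

Lemma ncoef_nmonoM_eq0 n D E (g : mpoly R n) :
  (exists2 i, (i < n)%N & (E i < D i)%N) -> ncoef (nmono n D * g) E = 0.
Proof.
elim: n D E g => [|n IH] D E g [[|i] lt_i_n ltED] //=;
  rewrite -mulrA coefXnM; first by rewrite ltED ncoef0.
by case: ifP => _; rewrite ?ncoef0 // coefCM IH ?mulr0 //; exists i.
Qed.

Lemma nmono_expansion n (f : mpoly R n) :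
  exists r : seq (nat -> nat), f = \sum_(E <- r) nconst n (ncoef f E) * nmono n E.
Proof.
elim: n f => [|n IH] f.
  by exists [:: fun _ => 0%N]; rewrite big_seq1 /= mulr1.
pose shift m (E : nat -> nat) j := if j is j'.+1 then E j' else m.
have partial m : exists r : seq (nat -> nat),
    \sum_(i < m) ((f : {poly mpoly R n})`_i)%:P * 'X^i =
    \sum_(E <- r) nconst n.+1 (ncoef (f : mpoly R n.+1) E) * nmono n.+1 E.
  elim: m => [|m [r eq_r]]; first by exists [::]; rewrite big_ord0 big_nil.
  have [rm eq_rm] := IH ((f : {poly mpoly R n})`_m).
  exists (r ++ map (shift m) rm).
  rewrite big_ord_recr /= eq_r big_cat big_map; congr (_ + _).
  rewrite {1}eq_rm rmorph_sum mulr_suml; apply: eq_bigr => E _ /=.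
  by rewrite polyCM -mulrA [_%:P * 'X^m]mulrC.
have [r eq_r] := partial (size (f : {poly mpoly R n})); exists r.
rewrite -eq_r -{1}[f : {poly mpoly R n}]coefK poly_def.
by apply: eq_bigr => i _; rewrite mul_polyC.
Qed.

Lemma prod_var_nat n (F : nat -> nat) :
  \prod_(i < n) var_nat R n i ^+ F i = nmono n F.
Proof.
elim: n F => [|n IH] F; first by rewrite big_ord0.
rewrite big_ord_recl /=.
under eq_bigr => i _ do rewrite add0n /bump leq0n add1n.
by rewrite -IH rmorph_prod /=; congr (_ * _); apply: eq_bigr => i _; rewrite rmorphXn.
Qed.

End IteratedCoefficients.

Section Exponents.
Variable n : nat.
Implicit Types (d e : expo n) (i j : 'I_n).

Definition expo_nat e (i : nat) : nat := if insub i is Some o then e o else 0%N.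

Lemma expo_natE e i : expo_nat e i = e i.
Proof. by rewrite /expo_nat valK. Qed.

Lemma expo_nat_ord e (k : nat) (lt_k_n : (k < n)%N) : expo_nat e k = e (Ordinal lt_k_n).
Proof. by rewrite -[k]/(nat_of_ord (Ordinal lt_k_n)) expo_natE. Qed.

Definition expo_add e d : expo n := [ffun i => e i + d i]%N.
Definition expo_sub e d : expo n := [ffun i => e i - d i]%N.
Definition expo_unit i : expo n := [ffun j => nat_of_bool (j == i)].
Definition expo_le d e := forall i, (d i <= e i)%N.

Lemma expo_addC e d : expo_add e d = expo_add d e.
Proof. by apply/ffunP => i; rewrite !ffunE addnC. Qed.

Lemma expo_subK d e : expo_le d e -> expo_add (expo_sub e d) d = e.
Proof. by move=> le_de; apply/ffunP => i; rewrite !ffunE subnK. Qed.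

Lemma expo_unit_le i e : (0 < e i)%N -> expo_le (expo_unit i) e.
Proof. by move=> e_i_gt0 j; rewrite ffunE; case: eqP => [->|]. Qed.

Lemma expo_unit_subK i e : (0 < e i)%N -> expo_add (expo_unit i) (expo_sub e (expo_unit i)) = e.
Proof. by move=> e_i_gt0; rewrite expo_addC expo_subK //; apply: expo_unit_le. Qed.

Lemma expo_unit_sub_move e i j : i != j ->
  expo_add (expo_unit i) (expo_sub e (expo_unit j)) = borel_move e i j.
Proof.
move=> /negPf neq_ij; apply/ffunP => k; rewrite !ffunE.
case: (k =P j) => [->|_]; first by rewrite eq_sym neq_ij subn1.
by rewrite subn0; case: eqP.
Qed.

Lemma borel_move_sub_unit e i j : i != j -> (0 < e j)%N ->
  expo_add (expo_sub (borel_move e i j) (expo_unit i)) (expo_unit j) = e.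
Proof.
move=> /eqP neq_ij e_j_gt0; apply/ffunP => k; rewrite !ffunE.
by do ![case: eqP => ?]; subst => //=; lia.
Qed.

Lemma borel_move_sub_unit_add e nu i j k : i != k -> (expo_unit k j < e j)%N ->
  borel_move (expo_add (expo_sub e (expo_unit k)) nu) i j =
  expo_add (expo_sub (borel_move e i j) (expo_unit k)) nu.
Proof.
move=> /eqP neq_ik; rewrite ffunE => lt_e_j; apply/ffunP => l; rewrite !ffunE.
by do ![case: eqP => ?]; subst => //=; move: lt_e_j; rewrite ?eqxx //=; lia.
Qed.

End Exponents.

Section MonomialCoefficients.
Variables (R : comNzRingType) (n : nat).
Implicit Types (d e : expo n) (f g : mpoly R n).

Definition mcoef f e : R := ncoef f (expo_nat e).

Lemma mono_nmono e : mono R e = nmono R n (expo_nat e).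
Proof. by rewrite /mono /var -prod_var_nat; apply: eq_bigr => i _; rewrite expo_natE. Qed.

Lemma monoD e d : mono R (expo_add e d) = mono R e * mono R d.
Proof. by rewrite /mono -big_split; apply: eq_bigr => i _; rewrite ffunE exprD. Qed.

Lemma mono_unit (i : 'I_n) : mono R (expo_unit i) = var R i.
Proof.
rewrite /mono (bigD1 i) //= big1 ?mulr1; first by rewrite ffunE eqxx expr1.
by move=> j /negPf neq_ji; rewrite ffunE neq_ji expr0.
Qed.

Lemma mcoef_monoM d e g : mcoef (mono R d * g) (expo_add e d) = mcoef g e.
Proof.
rewrite /mcoef mono_nmono ncoef_nmonoM => [|i lt_i_n].
  by apply: ncoef_ext => i lt_i_n; rewrite !(expo_nat_ord _ lt_i_n) ffunE addnK.
by rewrite !(expo_nat_ord _ lt_i_n) ffunE leq_addl.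
Qed.

Lemma mcoef_monoM_eq0 d e g : (exists i, (e i < d i)%N) -> mcoef (mono R d * g) e = 0.
Proof.
move=> [i lt_ed]; rewrite /mcoef mono_nmono ncoef_nmonoM_eq0 //.
by exists i => //; rewrite !expo_natE.
Qed.

Lemma mcoef_mono e : mcoef (mono R e) e = 1.
Proof.
rewrite -[mono R e]mulr1 /mcoef mono_nmono ncoef_nmonoM // ncoef1 // => i _.
exact: subnn.
Qed.

Lemma mcoef_sum (I : Type) (r : seq I) (F : I -> mpoly R n) e :
  mcoef (\sum_(x <- r) F x) e = \sum_(x <- r) mcoef (F x) e.
Proof. exact: ncoef_sum. Qed.

Lemma mono_expansion f :
  exists r : seq (expo n), f = \sum_(e <- r) nconst n (mcoef f e) * mono R e.
Proof.
have [r eq_r] := nmono_expansion f.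
pose to_expo (E : nat -> nat) : expo n := [ffun i : 'I_n => E i].
have eq_to_expo E i : (i < n)%N -> E i = expo_nat (to_expo E) i.
  by move=> lt_i_n; rewrite (expo_nat_ord _ lt_i_n) ffunE.
exists (map to_expo r); rewrite {1}eq_r big_map; apply: eq_bigr => E _.
by rewrite /mcoef mono_nmono -(ncoef_ext _ (eq_to_expo E)) -(nmono_ext _ (eq_to_expo E)).
Qed.

End MonomialCoefficients.

Section Ideals.
Variable S : comNzRingType.
Implicit Types (G I : S -> Prop).

Lemma ideal_sum I (X : eqType) (r : seq X) (F : X -> S) :
  is_ideal I -> (forall x, x \in r -> I (F x)) -> I (\sum_(x <- r) F x).
Proof.
move=> [I0 ID _]; elim: r => [|a r IH] memF; first by rewrite big_nil.
rewrite big_cons; apply: ID; first by apply: memF; rewrite mem_head.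
by apply: IH => x rx; apply: memF; rewrite inE rx orbT.
Qed.

Lemma gen_ideal_is_ideal G : is_ideal (gen_ideal G).
Proof.
split.
- by exists [::]; rewrite big_nil.
- move=> a b [r [Gr ->]] [r' [Gr' ->]]; exists (r ++ r'); rewrite big_cat.
  by split=> // c; rewrite mem_cat => /orP[]; [apply: Gr | apply: Gr'].
- move=> s a [r [Gr ->]]; exists (map (fun c => (s * c.1, c.2)) r); split.
    by move=> c /mapP[c' rc' ->]; apply: Gr rc'.
  by rewrite big_map mulr_sumr; apply: eq_bigr => c _; rewrite mulrA.
Qed.

Lemma gen_ideal_min G I : is_ideal I -> (forall g, G g -> I g) ->
  forall f, gen_ideal G f -> I f.
Proof.
move=> idI GI f [r [Gr ->]]; apply: ideal_sum => // c rc.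
by case: idI => _ _ IM; apply/IM/GI/Gr.
Qed.

Lemma gen_ideal_sub G G' : (forall g, G g -> G' g) ->
  forall f, gen_ideal G f -> gen_ideal G' f.
Proof. by move=> GG' f [r [Gr ->]]; exists r; split=> // c rc; apply/GG'/Gr. Qed.

Lemma gen_ideal_mul G g s : G g -> gen_ideal G (s * g).
Proof. by move=> Gg; exists [:: (s, g)]; rewrite big_seq1; split=> // c /[!inE] /eqP ->. Qed.

Lemma colon_is_ideal I f : is_ideal I -> is_ideal (colon I f).
Proof.
move=> [I0 ID IM]; split; rewrite /colon.
- by rewrite mul0r.
- by move=> a b Iaf Ibf; rewrite mulrDl; apply: ID.
- by move=> s a Iaf; rewrite -mulrA; apply: IM.
Qed.

End Ideals.

Section MonomialIdeals.
Variables (R : comNzRingType) (n : nat).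
Implicit Types (B G : mpoly R n -> Prop) (Q : expo n -> Prop) (d e : expo n).

Lemma gen_monomial_ideal_mcoef G Q f e :
  (forall g, G g -> exists d, g = mono R d /\ Q d) ->
  gen_ideal G f -> mcoef f e != 0 -> exists d, Q d /\ expo_le d e.
Proof.
move=> monoG [r [Gr ->]] nz; apply: NNPP => noQ; move: nz.
rewrite mcoef_sum big_seq big1 ?eqxx // => c rc.
have [d [-> Qd]] := monoG _ (Gr c rc); rewrite mulrC mcoef_monoM_eq0 //.
have [/forallP le_de | /forallPn[i]] := boolP [forall i, d i <= e i]%N.
  by case: noQ; exists d; split=> // i; apply: le_de.
by rewrite -ltnNge; exists i.
Qed.

Lemma gen_monomial_ideal_mono G Q e :
  (forall g, G g -> exists d, g = mono R d /\ Q d) ->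
  gen_ideal G (mono R e) -> exists d, Q d /\ expo_le d e.
Proof.
move=> monoG Ge; apply: gen_monomial_ideal_mcoef monoG Ge _.
by rewrite mcoef_mono oner_neq0.
Qed.

Lemma ideal_mono_le B d e : is_ideal B -> B (mono R d) -> expo_le d e -> B (mono R e).
Proof. by move=> [_ _ IM] Bd le_de; rewrite -(expo_subK le_de) monoD; apply: IM. Qed.

Lemma monomial_ideal_mcoef B f e :
  monomial_ideal B -> B f -> mcoef f e != 0 -> B (mono R e).
Proof.
move=> [idB genB] Bf nz.
have monoG g : (exists d, g = mono R d /\ B g) -> exists d, g = mono R d /\ B (mono R d).
  by move=> [d [-> Bd]]; exists d.
have [d [Bd le_de]] := gen_monomial_ideal_mcoef monoG ((genB f).1 Bf) nz.
exact: ideal_mono_le Bd le_de.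
Qed.

Lemma var_prime_monoP (p : 'I_n) e :
  var_prime R p (mono R e) <-> exists2 i : 'I_n, (i <= p)%N & (0 < e i)%N.
Proof.
split=> [prime_e | [i le_ip e_i_gt0]].
  have monoG g : (exists i : 'I_n, (i <= p)%N /\ g = var R i) ->
      exists d, g = mono R d /\ exists2 i : 'I_n, (i <= p)%N & d = expo_unit i.
    by move=> [i [le_ip ->]]; exists (expo_unit i); rewrite mono_unit; split=> //; exists i.
  have [_ [[i le_ip ->] le_ie]] := gen_monomial_ideal_mono monoG prime_e.
  by exists i => //; have := le_ie i; rewrite ffunE eqxx.
rewrite -(expo_subK (expo_unit_le e_i_gt0)) monoD mono_unit.
by apply: gen_ideal_mul; exists i.
Qed.

End MonomialIdeals.

Section BorelCover.
Variables (R : comNzRingType) (n : nat).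
Implicit Types (B : mpoly R n -> Prop) (T : expo n -> Prop) (d e t w : expo n).

Inductive borel_reach t : expo n -> Prop :=
| borel_reach_refl : borel_reach t t
| borel_reach_move w (i j : 'I_n) : borel_reach t w -> (i < j)%N -> (0 < w j)%N ->
    borel_reach t (borel_move w i j).

Lemma borel_reach_mem B t w : borel_ideal B -> B (mono R t) -> borel_reach t w -> B (mono R w).
Proof. by move=> [_ closedB] Bt; elim=> // {}w i j _ Bw lt_ij w_j_gt0; apply: closedB. Qed.

Definition borel_cover T e := exists t w, [/\ T t, borel_reach t w & expo_le w e].

Lemma borel_cover_le T d e : borel_cover T d -> expo_le d e -> borel_cover T e.
Proof.
move=> [t [w [Tt reach_w le_wd]]] le_de.
by exists t, w; split=> // k; apply: leq_trans (le_wd k) (le_de k).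
Qed.

Lemma borel_cover_move T e (i j : 'I_n) : (i < j)%N -> (0 < e j)%N ->
  borel_cover T e -> borel_cover T (borel_move e i j).
Proof.
move=> lt_ij e_j_gt0 [t [w [Tt reach_w le_we]]].
have [lt_wej | le_ewj] := ltnP (w j) (e j).
  exists t, w; split=> // k; rewrite ffunE.
  case: eqP => [->|_]; first by rewrite -ltnS prednK.
  by case: eqP => _; [apply: leq_trans (le_we k) (leqnSn _) | apply: le_we].
exists t, (borel_move w i j); split=> //.
  exact: borel_reach_move reach_w lt_ij (leq_trans e_j_gt0 le_ewj).
move=> k; rewrite !ffunE; case: eqP => [_|_]; first by rewrite -!subn1 leq_sub2r.
by case: eqP => _; rewrite ?ltnS; apply: le_we.
Qed.

Definition borel_cover_ideal T : mpoly R n -> Prop :=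
  gen_ideal (fun g => exists e, g = mono R e /\ borel_cover T e).

Lemma borel_cover_idealP T e : borel_cover_ideal T (mono R e) <-> borel_cover T e.
Proof.
split=> [cover_e | cover_e]; last by rewrite -[mono R e]mul1r; apply: gen_ideal_mul; exists e.
have [d [cover_d le_de]] := gen_monomial_ideal_mono (fun g Gg => Gg) cover_e.
exact: borel_cover_le cover_d le_de.
Qed.

Lemma borel_cover_ideal_borel T : borel_ideal (borel_cover_ideal T).
Proof.
split; [split|].
- exact: gen_ideal_is_ideal.
- move=> f; split.
    apply: gen_ideal_sub => g [e [-> cover_e]].
    by exists e; split=> //; apply/borel_cover_idealP.
  by apply: gen_ideal_min; [apply: gen_ideal_is_ideal | move=> g [e [-> ]]].
- move=> e i j lt_ij e_j_gt0 /borel_cover_idealP cover_e.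
  exact/borel_cover_idealP/borel_cover_move.
Qed.

Lemma borel_of_mem T e : T e -> borel_of R T (mono R e).
Proof. by move=> Te B' _; apply. Qed.

Lemma borel_of_cover T e : borel_of R T (mono R e) -> borel_cover T e.
Proof.
move=> borel_e; apply/borel_cover_idealP; apply: borel_e => [|t Tt].
  exact: borel_cover_ideal_borel.
apply/borel_cover_idealP; exists t, t.
by split; [| apply: borel_reach_refl | move=> k].
Qed.

End BorelCover.

Section TailFree.
Variables (R : comNzRingType) (n : nat) (B : mpoly R n -> Prop) (p : 'I_n).
Hypothesis borelB : borel_ideal B.
Implicit Types (e mu nu t w : expo n).

Definition supported_after nu := forall i : 'I_n, (i <= p)%N -> nu i = 0%N.

(* On monomials: (B : x^mu) is contained in (x_1, ..., x_p). *)
Definition tail_free mu := forall nu, supported_after nu -> ~ B (mono R (expo_add mu nu)).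

Let idealB : is_ideal B := borelB.1.1.

Lemma tail_free_le mu mu' : expo_le mu mu' -> tail_free mu' -> tail_free mu.
Proof.
move=> le_mu free_mu' nu nu_after B_mu_nu; apply: (free_mu' nu nu_after).
by apply: ideal_mono_le B_mu_nu _ => // k; rewrite !ffunE leq_add2r.
Qed.

Lemma tail_free_move_pred w (i j : 'I_n) : B (mono R w) -> (i < j)%N -> (0 < w j)%N ->
  (0 < borel_move w i j p)%N -> tail_free (expo_sub (borel_move w i j) (expo_unit p)) ->
  (0 < w p)%N /\ tail_free (expo_sub w (expo_unit p)).
Proof.
move=> Bw lt_ij w_j_gt0; rewrite ffunE => move_p_gt0 free_move.
have neq_ij : i != j by rewrite neq_ltn lt_ij.
have [eq_ip | neq_ip] := eqVneq i p.
  (* the move x_p / x_j (p < j) can be undone by the tail monomial x_j *)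
  case: (free_move (expo_unit j)).
    move=> k le_kp; rewrite ffunE; case: eqP => // eq_kj.
    by move: le_kp lt_ij; rewrite eq_kj eq_ip; lia.
  by rewrite -eq_ip borel_move_sub_unit.
have unit_lt_w : (expo_unit p j < w j)%N.
  by move: move_p_gt0; rewrite ffunE; case: (j =P p) => [->|_] //=; rewrite eqxx; lia.
split.
  move: move_p_gt0 unit_lt_w; rewrite !ffunE; case: (p =P j) => [->|_].
    by rewrite eqxx; lia.
  by rewrite eq_sym (negPf neq_ip).
move=> nu nu_after B_nu; apply: (free_move nu nu_after).
rewrite -borel_move_sub_unit_add //; apply: borelB.2 B_nu => //.
by move: unit_lt_w; rewrite !ffunE; lia.
Qed.

Lemma tail_free_reach_pred t w : B (mono R t) -> borel_reach t w ->
  (0 < w p)%N -> tail_free (expo_sub w (expo_unit p)) ->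
  (0 < t p)%N /\ tail_free (expo_sub t (expo_unit p)).
Proof.
move=> Bt; elim=> // {}w i j reach_w IH lt_ij w_j_gt0 move_p_gt0 free_move.
have [w_p_gt0 free_w] := tail_free_move_pred (borel_reach_mem borelB Bt reach_w)
  lt_ij w_j_gt0 move_p_gt0 free_move.
exact: IH.
Qed.

Lemma tail_free_gen (T : expo n -> Prop) mu : same_ideal (borel_of R T) B ->
  tail_free mu -> B (mono R (expo_add mu (expo_unit p))) ->
  exists t, [/\ T t, (0 < t p)%N & tail_free (expo_sub t (expo_unit p))].
Proof.
move=> genT free_mu B_mu_p.
have [t [w [Tt reach_w le_w]]] := borel_of_cover (proj2 (genT _) B_mu_p).
have Bt : B (mono R t) := (genT _).1 (borel_of_mem Tt).
have Bw : B (mono R w) := borel_reach_mem borelB Bt reach_w.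
have w_p_gt0 : (0 < w p)%N.
  rewrite lt0n; apply/eqP => w_p0; apply: (free_mu [ffun => 0%N]) => [k _|].
    by rewrite ffunE.
  apply: ideal_mono_le idealB Bw _ => k; have := le_w k; rewrite !ffunE addn0.
  by case: (k =P p) => [->|_]; rewrite ?w_p0 ?addn0.
have [t_p_gt0 free_t] : (0 < t p)%N /\ tail_free (expo_sub t (expo_unit p)).
  apply: tail_free_reach_pred Bt reach_w w_p_gt0 _.
  by apply: tail_free_le free_mu => k; move: (le_w k); rewrite !ffunE; lia.
by exists t.
Qed.

Lemma common_tail (r : seq (expo n)) :
  (forall e, e \in r -> exists nu, supported_after nu /\ B (mono R (expo_add e nu))) ->
  exists nu, supported_after nu /\ forall e, e \in r -> B (mono R (expo_add e nu)).
Proof.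
elim: r => [|a r IH] tails.
  by exists [ffun => 0%N]; split=> // k _; rewrite ffunE.
have [nu [nu_after B_r]] := IH (fun e re => tails e (mem_behead (s := a :: r) re)).
have [nu' [nu'_after B_a]] := tails a (mem_head a r).
exists (expo_add nu nu'); split=> [k le_kp|e].
  by rewrite ffunE nu_after // nu'_after.
rewrite inE => /predU1P[-> | re].
  by apply: ideal_mono_le idealB B_a _ => k; rewrite !ffunE; lia.
by apply: ideal_mono_le idealB (B_r e re) _ => k; rewrite !ffunE; lia.
Qed.

Lemma assoc_prime_tail_free : assoc_prime B (var_prime R p) ->
  exists mu, tail_free mu /\ B (mono R (expo_add mu (expo_unit p))).
Proof.
move=> [f prime_f]; apply: NNPP => no_mu.
have B_pf : colon B f (mono R (expo_unit p)).
  apply/prime_f/var_prime_monoP.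
  by exists p; rewrite // ffunE eqxx.
have [r eq_r] := mono_expansion f.
have tails e : e \in [seq e <- r | mcoef f e != 0] ->
    exists nu, supported_after nu /\ B (mono R (expo_add e nu)).
  rewrite mem_filter => /andP[nz _]; apply: NNPP => no_nu; apply: no_mu; exists e.
  split; last by apply: monomial_ideal_mcoef borelB.1 B_pf _; rewrite mcoef_monoM.
  by move=> nu nu_after B_e_nu; apply: no_nu; exists nu.
have [nu [nu_after B_r]] := common_tail tails.
have : var_prime R p (mono R nu).
  apply/(prime_f _).2; rewrite /colon eq_r mulr_sumr; apply: ideal_sum => // e re.
  have [nz | /negPn/eqP ->] := boolP (mcoef f e != 0); last first.
    by rewrite nconst0 !mul0r mulr0; case: idealB.
  rewrite mulrCA -monoD expo_addC; case: idealB => _ _; apply; apply: B_r.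
  by rewrite mem_filter nz.
by move=> /var_prime_monoP[i le_ip]; rewrite nu_after.
Qed.

Lemma colon_tail_free t : B (mono R t) -> (0 < t p)%N ->
  tail_free (expo_sub t (expo_unit p)) ->
  same_ideal (colon B (mono R (expo_sub t (expo_unit p)))) (var_prime R p).
Proof.
set q := expo_sub t (expo_unit p) => Bt t_p_gt0 free_q g; split.
  move=> B_gq; have [r ->] := mono_expansion g.
  have [P0 _ PM] := gen_ideal_is_ideal (fun f => exists i : 'I_n, (i <= p)%N /\ f = var R i).
  apply: ideal_sum; first exact: gen_ideal_is_ideal.
  move=> e _; have [nz | /negPn/eqP ->] := boolP (mcoef g e != 0); last first.
    by rewrite nconst0 mul0r; apply: P0.
  apply/PM/var_prime_monoP; apply: NNPP => not_prime_e; apply: (free_q e).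
    move=> i le_ip; apply/eqP; rewrite -leqn0 leqNgt; apply/negP => e_i_gt0.
    by apply: not_prime_e; exists i.
  by apply: monomial_ideal_mcoef borelB.1 B_gq _; rewrite mulrC expo_addC mcoef_monoM.
move=> prime_g; apply: gen_ideal_min prime_g; first exact: colon_is_ideal.
move=> _ [i [le_ip ->]].
rewrite /colon -mono_unit -monoD.
have [-> | neq_ip] := eqVneq i p; first by rewrite expo_unit_subK.
rewrite expo_unit_sub_move //; apply: borelB.2 Bt => //.
by rewrite ltn_neqAle le_ip andbT.
Qed.

End TailFree.

Theorem theorem3p2 (k : fieldType) (n : nat) (B : mpoly k n -> Prop)
  (p : 'I_n) (T : expo n -> Prop) :
  borel_ideal B ->
  is_Bgens B T ->
  assoc_prime B (var_prime k p) ->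
  exists (e : expo n) (q : mpoly k n),
    [/\ T e, mono k e = var k p * q & same_ideal (colon B q) (var_prime k p)].
Proof.
move=> borelB [genT _] assocP.
have [mu [free_mu B_mu]] := assoc_prime_tail_free borelB assocP.
have [t [Tt t_p_gt0 free_t]] := tail_free_gen borelB genT free_mu B_mu.
have Bt : B (mono k t) := (genT _).1 (borel_of_mem Tt).
exists t, (mono k (expo_sub t (expo_unit p))); split=> //.
  by rewrite -mono_unit -monoD expo_unit_subK.
exact: colon_tail_free.
Qed.
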